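(* For every $n\in\mathbb N$ there exists $N\in\mathbb N$ such that every finite strongly connected digraph $D$ on at least $N$ vertices contains (1) a dipath of length at least $n$, or (2) an $n$-short $(n,0)$-system of dipaths.
   Context: All digraphs are finite; a dipath is a directed path, a dicycle a directed cycle, and lengths count edges. Let $x,y$ be two, possibly equal, vertices and $k,\ell\in\mathbb N$ (with $\ell=0$ allowed). A $(k,\ell)$-system of $x$--$y$ dipaths is a system of $k+\ell$ internally disjoint dipaths (or dicycles through $x$ in case $x=y$), $k$ of which are $x$--$y$ dipaths and $\ell$ of which are $y$--$x$ dipaths; a $(k,\ell)$-system of dipaths is a $(k,\ell)$-system of $x$--$y$ dipaths for some $x,y$. Such a system $\mathcal P$ is $n$-short if, in case $x\ne y$, $|V(P)\cup V(Q)|<n$ for every $x$--$y$ dipath $P\in\mathcal P$ and every $y$--$x$ dipath $Q\in\mathcal P$, and, in case $x=y$, every dicycle in $\mathcal P$ has length less than $n$. *)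

(* A finite digraph is a finType V with an irreflexive
   arc relation E : rel V (no loops, no parallel arcs). *)
From mathcomp Require Import all_boot.
Set Implicit Arguments. Unset Strict Implicit. Unset Printing Implicit Defensive.

Section Digraphs.
Variables (V : finType) (E : rel V).

(* A dipath is represented by its sequence of vertices [v0; ...; vk];
   its length is k = (size s).-1.  [is_dipath x y s]: s is an x--y dipath. *)
Definition is_dipath (x y : V) (s : seq V) : bool :=
  if s is z :: t then [&& z == x, uniq s, path E z t & last z t == y]
  else false.

(* A dicycle through x, given by its vertex sequence [x; v1; ...; vk]
   (k >= 1), with arcs x->v1->...->vk->x; its length is size s. *)
Definition is_dicycle_through (x : V) (s : seq V) : bool :=
  if s is z :: t then [&& z == x, uniq s, t != [::] & cycle E s]
  else false.

Definition int_disj (x y : V) (s t : seq V) : Prop :=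
  s <> t /\ forall v, v \in s -> v \in t -> v = x \/ v = y.

Definition kl_system (k l : nat) (x y : V)
    (P : 'I_k -> seq V) (Q : 'I_l -> seq V) : Prop :=
  [/\ (forall i, if x == y then is_dicycle_through x (P i)
                 else is_dipath x y (P i)),
      (forall j, if x == y then is_dicycle_through x (Q j)
                 else is_dipath y x (Q j)),
      (forall i i', i != i' -> int_disj x y (P i) (P i')),
      (forall j j', j != j' -> int_disj x y (Q j) (Q j')) &
      (forall i j, int_disj x y (P i) (Q j))].

Definition n_short (n : nat) (k l : nat) (x y : V)
    (P : 'I_k -> seq V) (Q : 'I_l -> seq V) : Prop :=
  if x == y then
    (forall i, size (P i) < n) /\ (forall j, size (Q j) < n)
  else forall i j, #|[set v | (v \in P i) || (v \in Q j)]| < n.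

Definition strongly_connected : Prop := forall u v : V, connect E u v.

End Digraphs.

(* If no dipath has length n and all out-degrees are below K, every vertex
   lies within distance n of a fixed vertex, so there are at most K^n
   vertices.  Hence a large strongly connected digraph has a vertex v of huge
   out-degree.  Every out-neighbour of v returns to v along a dipath with
   fewer than n vertices (otherwise an out-neighbour of v missing from it
   would extend it).  A sunflower-type argument on these return paths yields
   n of them, cut down to prefixes, that pairwise meet only in a common last
   vertex t; putting v in front gives n dicycles through v if t = v, and n
   internally disjoint v--t dipaths otherwise. *)

From mathcomp Require Import all_boot zify.
From Stdlib Require Import Classical.
Set Implicit Arguments. Unset Strict Implicit. Unset Printing Implicit Defensive.

Lemma card_bigcup_le (I T : finType) (A : {pred I}) (F : I -> {set T}) :
  #|\bigcup_(i in A) F i| <= \sum_(i in A) #|F i|.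
Proof.
apply: (big_rec2 (fun (B : {set T}) m => #|B| <= m)) => [|i B m _ leBm].
  by rewrite cards0.
by rewrite (leq_trans (leq_card_setU _ _).1) ?leq_add2l.
Qed.

Lemma pigeonhole_fibre (I J : finType) (g : I -> J) (A : {set I}) (B : {set J}) m :
  {in A, forall a, g a \in B} -> #|B| * m < #|A| ->
  exists2 b, b \in B & m < #|[set a in A | g a == b]|.
Proof.
move=> gAB ltBA; apply/exists_inP; apply: contraLR ltBA => /exists_inPn small.
rewrite -leqNgt -sum1_card (partition_big g (mem B)) //= -sum_nat_const.
apply: leq_sum => b Bb; rewrite leqNgt.
rewrite (eq_bigl (fun a => a \in [set a in A | g a == b])) ?sum1_card ?small //.
by move=> a; rewrite inE.
Qed.

Fixpoint fan_bound (n s : nat) : nat :=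
  if s is s'.+1 then n * s * fan_bound n s' + 2 else 1.

Lemma fan_bound_gt0 n s : 0 < fan_bound n s.
Proof. by case: s => // s; rewrite /= addnS. Qed.

Section Digraph.
Variables (V : finType) (E : rel V).

Lemma is_dipathP x y p :
  is_dipath E x y p -> exists2 r, p = x :: r & [&& uniq (x :: r), path E x r & last x r == y].
Proof. by case: p => // z r /and4P [/eqP -> *]; exists r => //; apply/and3P. Qed.

Lemma is_dipath_consE x y r :
  is_dipath E x y (x :: r) = [&& uniq (x :: r), path E x r & last x r == y].
Proof. by rewrite /= eqxx. Qed.

Lemma dipath_uniq x y p : is_dipath E x y p -> uniq p.
Proof. by case/is_dipathP => r -> /and3P []. Qed.

Lemma mem_dipath_head x y p : is_dipath E x y p -> x \in p.
Proof. by case/is_dipathP => r -> _; rewrite mem_head. Qed.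

Lemma dipath_last x y p : is_dipath E x y p -> last x p = y.
Proof. by case/is_dipathP => r -> /and3P [_ _ /eqP]. Qed.

Lemma dipath_of_connect x y : connect E x y -> exists p, is_dipath E x y p.
Proof.
case/connectP => p Ep ->; have [q Eq uq _] := shortenP Ep.
by exists (x :: q); rewrite is_dipath_consE uq Eq eqxx.
Qed.

Lemma is_dipath_cons w x y p :
  E w x -> w \notin p -> is_dipath E x y p -> is_dipath E w y (w :: p).
Proof.
move=> Ewx wNp /is_dipathP [r pE /and3P [ur Er /eqP lr]]; subst p.
by rewrite is_dipath_consE cons_uniq wNp ur /= Ewx Er lr eqxx.
Qed.

Lemma is_dipath_rcons x y z p :
  is_dipath E x y p -> E y z -> z \notin p -> is_dipath E x z (rcons p z).
Proof.
case/is_dipathP => r -> /and3P [ur Er /eqP lr] Eyz zNp.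
rewrite rcons_cons is_dipath_consE -rcons_cons rcons_uniq zNp ur rcons_path Er lr Eyz.
by rewrite last_rcons eqxx.
Qed.

Lemma is_dipath_take x y p k :
  is_dipath E x y p -> 0 < k <= size p -> is_dipath E x (nth y p k.-1) (take k p).
Proof.
case/is_dipathP => r -> /and3P [ur Er _]; case: k => // k /andP [_ ltkr].
have lastk : last x (take k r) = nth y (x :: r) k.
  by rewrite -[last x _]/(last x (take k.+1 (x :: r))) (take_nth y) ?last_rcons.
rewrite [take _ _]/= is_dipath_consE -[x :: take k r]/(take k.+1 (x :: r)).
by rewrite take_uniq //= take_path //= lastk.
Qed.

Lemma prefix_dipath_end x y z p q :
  is_dipath E x y p -> is_dipath E x z q -> prefix q p -> y \in q -> y = z.
Proof.
move=> Pp Pq /prefixP [s pE] yq; have := dipath_uniq Pp; have := dipath_last Pp.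
rewrite pE; case/lastP: s {pE} => [|s w]; first by rewrite cats0 (dipath_last Pq).
rewrite last_cat last_rcons => wy; rewrite cat_uniq => /and3P [_ /hasPn qNs _].
by have := qNs w; rewrite mem_rcons mem_head wy yq => /(_ isT).
Qed.

Lemma is_dicycle_belast x y p :
  E y x -> x != y -> is_dipath E x y p -> is_dicycle_through E y (belast y p).
Proof.
move=> Eyx xy /is_dipathP [r -> /and3P [ur Er /eqP lr]].
have unrot : rcons (belast x r) y = x :: r by rewrite -lr -lastI.
have r0 : r != [::] by apply: contra_neq xy => r0; rewrite -lr r0.
have : uniq (rcons (belast x r) y) by rewrite unrot.
rewrite rcons_uniq => /andP [yNr ubr].
by rewrite /= eqxx yNr ubr unrot /= Eyx Er andbT; case: r r0 {unrot lr Er yNr ubr ur}.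
Qed.

Lemma is_dipath_take_index x y z p :
  is_dipath E x y p -> z \in p -> is_dipath E x z (take (index z p).+1 p).
Proof.
move=> Pp zp; have := is_dipath_take (k := (index z p).+1) Pp.
by rewrite /= nth_index // index_mem zp; apply.
Qed.

Lemma size_take_index_lt x y z p :
  is_dipath E x y p -> z \in p -> z != y -> size (take (index z p).+1 p) < size p.
Proof.
move=> Pp zp; have Pq := is_dipath_take_index Pp zp.
rewrite -[in X in _ < X](cat_take_drop (index z p).+1 p) size_cat -[X in X < _]addn0.
rewrite ltn_add2l lt0n size_eq0; apply: contra => /eqP d0.
have := dipath_last Pp; rewrite -(cat_take_drop (index z p).+1 p) d0 cats0.
by rewrite (dipath_last Pq) => ->.
Qed.

Definition out_nbrs (y : V) : {set V} := [set w | E y w].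
Definition grow (B : {set V}) : {set V} := \bigcup_(y in B) (y |: out_nbrs y).
Definition ball (x : V) (d : nat) : {set V} := iter d grow [set x].

Lemma card_grow K B : (forall y, #|out_nbrs y| < K) -> #|grow B| <= #|B| * K.
Proof.
move=> degK; rewrite -sum_nat_const (leq_trans (card_bigcup_le _ _)) //.
by apply: leq_sum => y _; rewrite cardsU1 (leq_trans _ (degK y)) // -add1n leq_add2r leq_b1.
Qed.

Lemma card_ball K x d : (forall y, #|out_nbrs y| < K) -> #|ball x d| <= K ^ d.
Proof.
move=> degK; elim: d => [|d IHd]; first by rewrite cards1.
by rewrite expnSr (leq_trans (card_grow _ degK)) ?leq_mul2r ?IHd ?orbT.
Qed.

Lemma mem_ball x p d : path E x p -> size p <= d -> last x p \in ball x d.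
Proof.
elim/last_ind: p d => [d _ _|p z IHp [|d]]; last 2 first.
- by rewrite size_rcons.
- rewrite rcons_path last_rcons size_rcons ltnS => /andP [Ep Ez] lepd.
  by apply/bigcupP; exists (last x p); rewrite ?IHp // !inE Ez orbT.
by elim: d => [|d IHd]; [rewrite inE | apply/bigcupP; exists x; rewrite ?setU11].
Qed.

Lemma exists_large_out_nbrs n K :
  strongly_connected E -> (forall x y p, is_dipath E x y p -> size p <= n) ->
  K ^ n < #|V| -> exists v, K <= #|out_nbrs v|.
Proof.
move=> scE shortE bigV; have [x _] := card_gt0P (leq_ltn_trans (leq0n _) bigV).
apply/existsP; apply: contraLR bigV => /existsPn small.
have degK y : #|out_nbrs y| < K by rewrite ltnNge small.
rewrite -leqNgt -cardsT (leq_trans _ (card_ball x n degK)) // subset_leq_card //.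
apply/subsetP => y _; have [p Pp] := dipath_of_connect (scE x y).
have := shortE _ _ _ Pp; case/is_dipathP: Pp => r -> /and3P [_ Er /eqP <-].
by move=> /ltnW; apply: mem_ball.
Qed.

Lemma short_dipath_to_large_out_nbrs n u v p :
  (forall x y p, is_dipath E x y p -> size p <= n) -> n < #|out_nbrs v| ->
  is_dipath E u v p -> size p < n.
Proof.
move=> shortE bigv Pp; rewrite ltn_neqAle (shortE _ _ _ Pp) andbT; apply/eqP => pn.
have : ~~ (out_nbrs v \subset p).
  apply: contraTN bigv => /subset_leq_card le.
  by rewrite -leqNgt (leq_trans le) // -pn card_size.
case/subsetPn => w; rewrite inE => Evw wNp.
by have := shortE _ _ _ (is_dipath_rcons Pp Evw wNp); rewrite size_rcons pn ltnn.
Qed.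

Definition meet_only_at (t : V) (f : V -> seq V) (C : {set V}) : bool :=
  [forall c in C, forall c' in C,
     (c != c') ==> [forall z in f c, (z \in f c') ==> (z == t)]].

Lemma meet_only_atP t f (C : {set V}) :
  reflect {in C &, forall c c', c != c' -> forall z, z \in f c -> z \in f c' -> z = t}
          (meet_only_at t f C).
Proof.
apply: (iffP forall_inP) => [meet c c' cC c'C cc' z zc zc' | meet c cC].
  move: (meet c cC) => /forall_inP/(_ c' c'C)/implyP/(_ cc').
  by move=> /forall_inP/(_ z zc)/implyP/(_ zc')/eqP.
apply/forall_inP => c' c'C; apply/implyP => cc'.
by apply/forall_inP => z zc; apply/implyP => zc'; apply/eqP; apply: meet zc zc'.
Qed.

Definition fan_in (t : V) (f : V -> seq V) (U : {set V}) : pred {set V} :=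
  [pred C : {set V} | (C \subset U) && meet_only_at t f C].

Definition fan_body (t : V) (f : V -> seq V) (C : {set V}) : {set V} :=
  (\bigcup_(c in C) [set z in f c]) :\ t.

Lemma card_fan_body t f (C : {set V}) s :
  {in C, forall c, size (f c) <= s} -> #|fan_body t f C| <= #|C| * s.
Proof.
move=> fs; rewrite -sum_nat_const (leq_trans (subset_leq_card (subD1set _ _))) //.
rewrite (leq_trans (card_bigcup_le _ _)) // leq_sum // => c cC.
by rewrite cardsE (leq_trans (card_size _)) ?fs.
Qed.

Lemma maxset_fan_meets_body t f U C u :
  maxset (fan_in t f U) C -> u \in U -> u \in f u -> u != t ->
  has (mem (fan_body t f C)) (f u).
Proof.
move=> maxC uU uf ut; have /andP [CU /meet_only_atP meetC] := maxsetp maxC.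
apply: contraT => /hasPn miss.
have meet_u c z : c \in C -> z \in f u -> z \in f c -> z = t.
  move=> cC zu zc; apply/eqP; apply: contraNT (miss z zu) => zt.
  by rewrite !inE zt; apply/bigcupP; exists c; rewrite ?inE.
suff uC : u \in C.
  by have := miss u uf; rewrite !inE ut; case/negP; apply/bigcupP; exists u; rewrite ?inE.
suff <- : u |: C = C by rewrite setU11.
apply: maxsetsup maxC _ (subsetUr _ _); rewrite /fan_in /= subUset sub1set uU CU /=.
apply/meet_only_atP => c c'; rewrite !inE.
move=> /predU1P [-> | cC] /predU1P [-> | c'C]; rewrite ?eqxx // => cc' z.
- by move=> zu; apply: meet_u.
- by move=> zc zu; apply: meet_u zu zc.
- exact: meetC cC c'C cc' z.
Qed.

(* Take a maximal subfamily of paths meeting only at t.  If it has fewer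
   than n members, its body has fewer than n (s + 1) vertices and, by
   maximality, every other path meets it; by pigeonhole many paths first meet
   it in the same vertex w, and their prefixes up to w are shorter. *)
Lemma fan_of_prefixes n s t (U : {set V}) (f : V -> seq V) :
  {in U, forall u, is_dipath E u t (f u) /\ size (f u) <= s} -> fan_bound n s <= #|U| ->
  exists t' (C : {set V}) (g : V -> seq V),
    [/\ C \subset U, n <= #|C|, meet_only_at t' g C &
        {in C, forall c, is_dipath E c t' (g c) /\ prefix (g c) (f c)}].
Proof.
elim: s t U f => [|s IHs] t U f fU bigU.
  by have /card_gt0P [u uU] : 0 < #|U| := bigU; have [/is_dipathP [r -> _]] := fU u uU.
have fan0 : fan_in t f U set0.
  by rewrite /fan_in /= sub0set; apply/meet_only_atP => c; rewrite inE.
have [C maxC _] := maxset_exists fan0; have /andP [CU meetC] := maxsetp maxC.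
have [nC | Cn] := leqP n #|C|.
  exists t, C, f; split => // c cC.
  by split; [exact: (fU c (subsetP CU c cC)).1 | exact: prefix_refl].
pose W := fan_body t f C; pose g u := nth t (f u) (find (mem W) (f u)).
have gW u : u \in U :\ t -> g u \in W /\ g u \in f u.
  case/setD1P => ut uU; have [Pu _] := fU u uU.
  have hit := maxset_fan_meets_body maxC uU (mem_dipath_head Pu) ut.
  split; last by rewrite mem_nth // -has_find.
  by have := nth_find t hit.
have [w wW bigF] : exists2 w, w \in W &
    (fan_bound n s).-1 < #|[set u in U :\ t | g u == w]|.
  apply: pigeonhole_fibre => [u /gW [] // | ].
  have W_le : #|W| <= #|C| * s.+1.
    by apply: card_fan_body => c cC; have [] := fU c (subsetP CU c cC).
  have := cardsD1 t U; have := leq_b1 (t \in U); have := fan_bound_gt0 n s.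
  move: bigU W_le Cn => /=; set h := fan_bound n s; nia.
set F := [set u in U :\ t | g u == w]; pose f' u := take (index (g u) (f u)).+1 (f u).
have f'F : {in F, forall u, is_dipath E u w (f' u) /\ size (f' u) <= s}.
  move=> u; rewrite inE => /andP [uUt /eqP <-]; have [gWu gfu] := gW u uUt.
  have [Pu su] := fU u (subsetP (subD1set U t) u uUt); rewrite -ltnS.
  split; first exact: is_dipath_take_index Pu gfu.
  by apply: leq_trans su; apply: size_take_index_lt Pu gfu _; case/setD1P: gWu.
have bigF' : fan_bound n s <= #|F| by rewrite -(prednK (fan_bound_gt0 n s)).
have [t' [C' [g' [C'F nC' meetC' g'C']]]] := IHs w F f' f'F bigF'.
exists t', C', g'; split => // [|c cC'].
  by apply: subset_trans C'F _; apply/subsetP => u; rewrite !inE => /andP [/andP [_ ->]].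
have [Pc pc] := g'C' c cC'; split => //; apply: prefix_trans pc _; exact: prefix_take.
Qed.

Lemma mem_belast_dipath x y p : is_dipath E x y p -> x != y -> x \in belast y p.
Proof.
case/is_dipathP => [[|z r] -> /and3P [_ _ /eqP lr]] xy; first by rewrite -lr eqxx in xy.
by rewrite /= !inE eqxx orbT.
Qed.

Lemma kl_system_n0 k x y (P : 'I_k -> seq V) (Q : 'I_0 -> seq V) :
  (forall i, if x == y then is_dicycle_through E x (P i) else is_dipath E x y (P i)) ->
  (forall i i', i != i' -> int_disj x y (P i) (P i')) -> kl_system E x y P Q.
Proof. by move=> PP Pdisj; split => // [[]|[]|? []]. Qed.

Lemma kl_system_dicycles n v (c : 'I_n -> V) (p : 'I_n -> seq V) (Q : 'I_0 -> seq V) :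
  (forall i, E v (c i)) -> (forall i, c i != v) -> (forall i, is_dipath E (c i) v (p i)) ->
  (forall i i', i != i' -> forall z, z \in p i -> z \in p i' -> z = v) ->
  kl_system E v v (fun i => belast v (p i)) Q.
Proof.
move=> Evc cv Pp meet; apply: kl_system_n0 => [i | i i' ii'].
  by rewrite eqxx; exact: is_dicycle_belast (Evc i) (cv i) (Pp i).
have mem_p j z : z \in belast v (p j) -> z = v \/ z \in p j.
  by move/mem_belast; rewrite inE => /predU1P.
split => [pp' | z /mem_p zp /mem_p zp']; last first.
  by left; case: zp zp' => [// | zi] [// | zi']; apply: meet _ _ ii' _ zi zi'.
have : c i \in belast v (p i') by rewrite -pp'; apply: mem_belast_dipath (Pp i) (cv i).
case/mem_p => [civ | cip']; first by move/eqP: (cv i).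
by move/eqP: (cv i); apply; apply: meet _ _ ii' _ (mem_dipath_head (Pp i)) cip'.
Qed.

Lemma kl_system_dipaths n v t (c : 'I_n -> V) (p : 'I_n -> seq V) (Q : 'I_0 -> seq V) :
  v != t -> injective c -> (forall i, E v (c i)) -> (forall i, v \notin p i) ->
  (forall i, is_dipath E (c i) t (p i)) ->
  (forall i i', i != i' -> forall z, z \in p i -> z \in p i' -> z = t) ->
  kl_system E v t (fun i => v :: p i) Q.
Proof.
move=> vt c_inj Evc vNp Pp meet; apply: kl_system_n0 => [i | i i' ii'].
  by rewrite (negbTE vt); apply: is_dipath_cons (Evc i) (vNp i) (Pp i).
split => [[pp'] | z].
  case/is_dipathP: (Pp i) pp' => r -> _; case/is_dipathP: (Pp i') => r' -> _ [ci _].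
  by move/eqP: ii'; apply; apply: c_inj.
rewrite !inE => /predU1P [-> | zi]; first by left.
by case/predU1P => [-> | zi']; [left | right; apply: meet _ _ ii' _ zi zi'].
Qed.

Lemma n_short_system_of_fan n v t (C : {set V}) (g : V -> seq V) :
  irreflexive E -> C \subset out_nbrs v -> n <= #|C| -> meet_only_at t g C ->
  {in C, forall c, is_dipath E c t (g c) /\ size (g c) < n} ->
  {in C, forall c, v \in g c -> v = t} ->
  exists (x y : V) (P : 'I_n -> seq V) (Q : 'I_0 -> seq V),
    kl_system E x y P Q /\ n_short n x y P Q.
Proof.
move=> irrE Cv nC /meet_only_atP meetC gC vgC.
pose c i := enum_val (widen_ord nC i); have cC i : c i \in C := enum_valP _.
have c_inj : injective c by move=> i i' /enum_val_inj [] /val_inj.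
have Evc i : E v (c i) by have := subsetP Cv _ (cC i); rewrite inE.
have meet i i' : i != i' -> forall z, z \in g (c i) -> z \in g (c i') -> z = t.
  by move=> ii'; apply: meetC (cC i) (cC i') _; rewrite (inj_eq c_inj).
have [vt | vt] := eqVneq v t; first subst t.
  exists v, v, (fun i => belast v (g (c i))), (fun=> [::]); split.
    apply: (kl_system_dicycles (p := fun i => g (c i)) _ Evc _ _ meet) => i.
      by apply: contraTneq (Evc i) => ->; rewrite irrE.
    exact: (gC _ (cC i)).1.
  by rewrite /n_short eqxx; split => [i | []//]; rewrite size_belast; case: (gC _ (cC i)).
exists v, t, (fun i => v :: g (c i)), (fun=> [::]); split.
  apply: (kl_system_dipaths (p := fun i => g (c i)) _ vt c_inj Evc _ _ meet) => i.
    by apply: contraNN vt => /(vgC _ (cC i)) ->.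
  exact: (gC _ (cC i)).1.
by rewrite /n_short (negbTE vt) => ? [].
Qed.

End Digraph.

Theorem theorem3p3 :
  forall n : nat, exists N : nat,
    forall (V : finType) (E : rel V),
      irreflexive E -> strongly_connected E -> N <= #|V| ->
      (exists (x y : V) (s : seq V), is_dipath E x y s /\ n <= (size s).-1)
      \/
      (exists (x y : V) (P : 'I_n -> seq V) (Q : 'I_0 -> seq V),
          kl_system E x y P Q /\ n_short n x y P Q).
Proof.
move=> n; pose K := maxn (fan_bound n n.-1) n.+1.
exists (K ^ n).+1 => V E irrE scE bigV.
have [long | noLong] := classic (exists x y s, is_dipath E x y s /\ n <= (size s).-1).
  by left.
right; have shortE x y p : is_dipath E x y p -> size p <= n.
  move=> Pp; rewrite leqNgt; apply/negP => long; apply: noLong.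
  by exists x, y, p; rewrite -ltnS (ltn_predK long).
have [v /[!geq_max] /andP [bigv nv]] := exists_large_out_nbrs scE shortE bigV.
pose f u := xchoose (dipath_of_connect (scE u v)).
have fP u : is_dipath E u v (f u) := xchooseP _.
have fS : {in out_nbrs E v, forall u, is_dipath E u v (f u) /\ size (f u) <= n.-1}.
  move=> u _; have lt_n := short_dipath_to_large_out_nbrs shortE nv (fP u).
  by split => //; rewrite -ltnS (ltn_predK lt_n).
have [t [C [g [Cv nC meetC gC]]]] := fan_of_prefixes fS bigv.
apply: n_short_system_of_fan irrE Cv nC meetC _ _ => c cC; have [Pc pc] := gC c cC.
  split=> //; apply: leq_ltn_trans (size_prefix pc) _.
  exact: short_dipath_to_large_out_nbrs shortE nv (fP c).
exact: prefix_dipath_end (fP c) Pc pc.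
Qed.
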